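(* For every prime power $q$ and integer $n\geq 2$, the design of points and hyperplanes of $\mathrm{PG}(n,q)$ is additive under $\mathrm{EA}(q^{n+1})$. In particular, the desarguesian projective plane of order $q$ is additive under $\mathrm{EA}(q^3)$.
   Context: $\mathrm{PG}(n,q)$ is the $n$-dimensional projective geometry over the finite field $\mathbb{F}_q$; its point-hyperplane design has the points of $\mathrm{PG}(n,q)$ as points and the hyperplanes (as sets of points) as blocks. $\mathrm{EA}(q^{n+1})$ denotes the elementary abelian group of order $q^{n+1}$. A design $(V,\mathscr B)$ is additive under an abelian group $G$ if there is an injective map $f:V\to G$ such that $\sum_{x\in B}f(x)=0$ for every block $B\in\mathscr B$. *)

From HB Require Import structures.
From mathcomp Require Import all_boot all_order all_algebra all_fingroup all_field.
Set Implicit Arguments. Unset Strict Implicit. Unset Printing Implicit Defensive.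
Import GRing.Theory.
Local Open Scope ring_scope.

Definition additive_design (V : finType) (B : {set {set V}}) (G : zmodType) : Prop :=
  exists f : V -> G, injective f /\ (forall b, b \in B -> \sum_(x in b) f x = 0).

(* Subspaces of F^(n+1) (row vectors) are represented canonically by square
   matrices M with <<M>> = M (their row space). *)
Definition PGpoint (F : finFieldType) (n : nat) :=
  { X : 'M[F]_(n.+1) | (\rank X == 1%N) && (<<X>>%MS == X) }.
Definition PGhyperplane (F : finFieldType) (n : nat) :=
  { H : 'M[F]_(n.+1) | (\rank H == n) && (<<H>>%MS == H) }.

Definition PG_hyperplane_blocks (F : finFieldType) (n : nat) : {set {set PGpoint F n}} :=
  [set [set P : PGpoint F n | (val P <= val H)%MS] | H : PGhyperplane F n].

Definition elementary_abelian_of_order (G : finZmodType) (m : nat) : Prop :=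
  #|G| = m /\ exists p : nat, prime p /\ forall x : G, x *+ p = 0.

From HB Require Import structures.
From mathcomp Require Import all_boot all_order all_algebra all_fingroup all_solvable all_field.
Set Implicit Arguments. Unset Strict Implicit. Unset Printing Implicit Defensive.
Import GRing.Theory passmx.
Local Open Scope ring_scope.

(* Identify F^(n+1) with the field L = GF(q^(n+1)) through an F-linear
   bijection phi and send the point <v> to phi(v)^(q-1).  This does not depend
   on the choice of v, and it is injective because x^(q-1) = y^(q-1) forces
   x/y into F.  A hyperplane H has dimension n >= 2 and each of its points
   carries q - 1 = -1 nonzero vectors, so its block sum is
   -sum_(v in H) phi(v)^(q-1).  Splitting H into the cosets of a line, each
   coset contributes sum_t (t a + b)^(q-1) = -a^(q-1), and the q^(n-1) equal
   contributions cancel.  Finally L and G are elementary abelian groups of the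
   same order, hence isomorphic. *)

Section FinFieldPowerSums.

Variable F : finFieldType.
Local Notation q := #|F|.

Let q_gt1 : (1 < q)%N := finNzRing_gt1 F.

Lemma card_finField_pred_gt0 : (0 < q.-1)%N.
Proof. by rewrite -ltnS prednK // ltnW. Qed.

Lemma natr_card_finField : q%:R = 0 :> F.
Proof.
have [p _ pcharFp] := finPcharP F.
rewrite (card_pprimeChar pcharFp) natrX (pcharf0 pcharFp) expr0n.
by case: eqP => // logq0; move: q_gt1; rewrite (card_pprimeChar pcharFp) logq0.
Qed.

Lemma natr_card_pred : q.-1%:R = -1 :> F.
Proof.
apply/eqP; rewrite -subr_eq0 opprK natr1 prednK ?natr_card_finField //.
exact: ltnW.
Qed.

Lemma scaler_card_pred (V : lmodType F) (x : V) : x *+ q.-1 = - x.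
Proof. by rewrite -scaler_nat natr_card_pred scaleN1r. Qed.

Lemma scaler_card_expn (V : lmodType F) (x : V) k : (0 < k)%N -> x *+ q ^ k = 0.
Proof.
case: k => // k _; rewrite expnS mulnC mulrnA -scaler_nat natr_card_finField.
exact: scale0r.
Qed.

Lemma expf_card_pred (t : F) : t != 0 -> t ^+ q.-1 = 1.
Proof.
by move=> t_neq0; apply: (mulfI t_neq0); rewrite mulr1 -exprS prednK ?expf_card // ltnW.
Qed.

Lemma exists_expf_neq1 j : (0 < j < q.-1)%N -> {a : F | a != 0 & a ^+ j != 1}.
Proof.
case/andP=> j_gt0 lt_j_q.
have [a /andP[] | all_roots] := pickP [pred a : F | (a != 0) && (a ^+ j != 1)].
  by exists a.
pose p : {poly F} := 'X^j - 1.
have size_p : size p = j.+1.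
  by rewrite size_polyDl ?size_polyXn // size_polyN size_poly1 ltnS.
have p_neq0 : p != 0 by rewrite -size_poly_eq0 size_p.
have roots_p : all (root p) (enum (predC1 0)).
  apply/allP=> x; rewrite mem_enum inE => x_neq0; rewrite /root !hornerE subr_eq0.
  by move: (all_roots x); rewrite /= x_neq0 => /negbFE.
have := max_poly_roots p_neq0 roots_p (enum_uniq _).
by rewrite -cardE cardC1 size_p ltnS leqNgt lt_j_q.
Qed.

Lemma sum_expf_lt j : (j < q.-1)%N -> \sum_(t : F) t ^+ j = 0.
Proof.
case: j => [_ | j lt_j_q].
  rewrite (eq_bigr (fun=> 1)) => [|t _]; last exact: expr0.
  by rewrite sumr_const natr_card_finField.
have [a a_neq0 aj_neq1] := exists_expf_neq1 (lt_j_q : (0 < j.+1 < q.-1)%N).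
have sum_scale : \sum_(t : F) t ^+ j.+1 = a ^+ j.+1 * \sum_(t : F) t ^+ j.+1.
  rewrite mulr_sumr (reindex_inj (mulfI a_neq0)) /=.
  by apply: eq_bigr => t _; rewrite exprMn.
apply/eqP; move/eqP: sum_scale; rewrite -subr_eq0 -[X in X - _]mul1r -mulrBl.
by rewrite mulf_eq0 subr_eq0 eq_sym (negbTE aj_neq1).
Qed.

Lemma sum_expf_card_pred : \sum_(t : F) t ^+ q.-1 = -1.
Proof.
rewrite (bigD1 0) //= expr0n gtn_eqF ?card_finField_pred_gt0 // add0r.
rewrite (eq_bigr (fun=> 1)) => [|t /expf_card_pred //].
by rewrite sumr_const cardC1 natr_card_pred.
Qed.

End FinFieldPowerSums.

Lemma expf_card_pred_eq1 (F : finFieldType) (L : fieldExtType F) (x : L) :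
  x ^+ #|F|.-1 = 1 -> exists t : F, x = t%:A.
Proof.
move=> x_pow1; have: x \in 1%VS.
  rewrite Fermat's_little_theorem /= dimv1 expn1.
  by rewrite -(prednK (ltnW (finNzRing_gt1 F))) exprS x_pow1 mulr1.
by case/vlineP=> t ->; exists t.
Qed.

Lemma finField_ext_exists (F : finFieldType) k :
  (0 < k)%N -> {L : fieldExtType F | \dim {:L} = k}.
Proof.
move=> k_gt0; pose m := (#|F| ^ k)%N.
have q_gt1 := finNzRing_gt1 F.
have m_gt1 : (1 < m)%N by rewrite /m (ltn_exp2l 0).
have m_gt0 := ltnW m_gt1; have m1_gt0 : (0 < m.-1)%N by rewrite -ltnS prednK.
pose p (R : nzRingType) : {poly R} := 'X^m - 'X.
have Dp R : p R = ('X^(m.-1) - 1) * ('X - 0).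
  by rewrite subr0 mulrBl mul1r -exprSr prednK.
have /FinSplittingFieldFor[/= L splitLp] : p F != 0.
  by rewrite Dp monic_neq0 ?rpredM ?monicXsubC ?monicXnsubC.
rewrite rmorphB rmorphXn /= map_polyX -/(p L) in splitLp.
(* The roots of 'X^m - 'X are the fixed points of the k-th power of the
   Frobenius generator x |-> x^q, hence form a subfield containing all the
   generators of L: so L consists of exactly these m distinct roots. *)
exists L; pose Lf := FinFieldExtType L.
suffices card_L : #|Lf| = m.
  apply: (expnI q_gt1).
  by rewrite -[LHS](card_vspace (fullv : {vspace finvect_type L})) card_vspacef.
have /finField_galois_generator[/= a _ Da] : (1 <= {:L})%VS by apply: sub1v.
pose Em := fixedSpace (a ^+ k)%g; rewrite dimv1 expn1 in Da.
have{splitLp} [zs DpL defL] := splitLp.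
have m_eq0 : m%:R = 0 :> L := scaler_card_expn (1 : L) k_gt0.
have Uzs : uniq zs.
  rewrite -separable_prod_XsubC -(eqp_separable DpL) Dp separable_root andbC.
  rewrite /root !hornerE subr_eq0 eq_sym expr0n gtn_eqF ?oner_eq0 //=.
  rewrite cyclotomic.separable_Xn_sub_1 // -subn1 natrB // subr_eq0.
  by rewrite m_eq0 eq_sym oner_eq0.
suffices /eq_card-> : Lf =i zs.
  apply: succn_inj; rewrite (card_uniqP _) //= -(size_prod_XsubC _ id).
  by rewrite -(eqp_size DpL) size_polyDl size_polyXn // size_polyN size_polyX.
have in_zs : zs =i Em.
  move=> z; rewrite -root_prod_XsubC -(eqp_root DpL) (sameP fixedSpaceP eqP).
  rewrite /root !hornerE subr_eq0 /= /m; congr (_ == z).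
  elim: (k) => [|i IHi]; first by rewrite gal_id.
  by rewrite expgSr expnSr exprM IHi galM ?Da ?memvf.
suffices defEm : Em = {:L}%VS by move=> z; rewrite in_zs defEm memvf.
apply/eqP; rewrite eqEsubv subvf -defL -[Em]subfield_closed agenvS //.
by rewrite subv_add sub1v; apply/span_subvP=> z; rewrite in_zs.
Qed.

Lemma vect_rV_linear_inj (K : fieldType) (vT : vectType K) k :
  \dim {:vT} = k -> {phi : {linear 'rV[K]_k -> vT} | injective phi}.
Proof.
move=> <-; exists (vecof (vbasis fullv)).
exact: can_inj (vecofK (vbasisP fullv)).
Qed.

Lemma sum_row_mx (T : finType) (R : nmodType) m n (h : 'rV[T]_(m + n) -> R) :
  \sum_y h y = \sum_(u : 'rV[T]_m) \sum_(v : 'rV[T]_n) h (row_mx u v).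
Proof.
rewrite pair_big (reindex (fun uv => row_mx uv.1 uv.2)) //=.
exists (fun y => (lsubmx y, rsubmx y)) => [[u v] _ | y _] /=.
  by rewrite row_mxKl row_mxKr.
exact: hsubmxK.
Qed.

Lemma sum_rV1 (T : finNzRingType) (R : nmodType) (h : 'rV[T]_1 -> R) :
  \sum_(u : 'rV[T]_1) h u = \sum_(t : T) h t%:M.
Proof.
rewrite (reindex (fun t : T => t%:M)) //.
exists (fun u : 'rV[T]_1 => u 0 0) => [t _ | u _]; first by rewrite mxE eqxx.
exact/esym/mx11_scalar.
Qed.

Section AlgebraPowerSums.

Variables (F : finFieldType) (L : comAlgType F).
Local Notation q := #|F|.

Lemma sum_scale_add_expf (a b : L) :
  \sum_(t : F) (t *: a + b) ^+ q.-1 = - a ^+ q.-1.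
Proof.
have expand i : \sum_(t : F) (t *: a) ^+ (q.-1 - i) * b ^+ i *+ 'C(q.-1, i)
    = (\sum_(t : F) t ^+ (q.-1 - i)) *: (a ^+ (q.-1 - i) * b ^+ i) *+ 'C(q.-1, i).
  by rewrite sumrMnl scaler_suml; congr (_ *+ _); apply: eq_bigr => t _;
    rewrite exprZn -scalerAl.
under eq_bigr do rewrite exprDn.
rewrite exchange_big big_ord_recl /= expand [X in _ + X]big1 => [|i _] /=.
  by rewrite subn0 sum_expf_card_pred scaleN1r expr0 mulr1 bin0 addr0.
by rewrite expand sum_expf_lt ?scale0r ?mul0rn // ltn_subrL card_finField_pred_gt0.
Qed.

Lemma sum_linear_expf r (f : {linear 'rV[F]_r -> L}) :
  (1 < r)%N -> \sum_y f y ^+ q.-1 = 0.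
Proof.
case: r f => [|[|s]] // f _.
pose e := f (row_mx 1%:M 0 : 'rV_(1 + s.+1)).
have line t (v : 'rV_s.+1) :
    f (row_mx t%:M v) = t *: e + f (row_mx (0 : 'rV_1) v).
  rewrite -linearZ -linearD /=; congr (f _).
  rewrite (scale_row_mx (n1 := 1) (n2 := s.+1)) scaler0 scalemx1.
  by rewrite (add_row_mx (n1 := 1)) add0r addr0.
rewrite (sum_row_mx (m := 1) (n := s.+1) (fun y => f y ^+ q.-1)) exchange_big /=.
under eq_bigr do rewrite sum_rV1; under eq_bigr do under eq_bigr do rewrite line.
under eq_bigr do rewrite sum_scale_add_expf.
by rewrite sumr_const card_mx scaler_card_expn.
Qed.

Lemma sum_submx_linear_expf n m (f : {linear 'rV[F]_n -> L}) (H : 'M[F]_(m, n)) :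
  (1 < \rank H)%N -> \sum_(v | (v <= H)%MS) f v ^+ q.-1 = 0.
Proof.
move=> rankH; set B := row_base H.
rewrite (reindex_onto (mulmxr B) (mulmxr (pinvmx B))) => [|v vH]; last first.
  by rewrite /= mulmxKpV // eq_row_base.
rewrite (eq_bigl xpredT) => [|y]; last first.
  by rewrite /= -(eq_row_base H) submxMl mulmxKp ?row_base_free ?eqxx.
exact: (sum_linear_expf (f \o mulmxr B)).
Qed.

End AlgebraPowerSums.

Section ProjectivePoints.

Variables (F : finFieldType) (n : nat).
Local Notation q := #|F|.
Implicit Types (P Q : PGpoint F n) (v : 'rV[F]_n.+1).

Lemma rank_PGpoint P : \rank (val P) = 1%N.
Proof. by case: P => X /= /andP[/eqP]. Qed.

Lemma genmx_PGpoint P : <<val P>>%MS = val P.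
Proof. by case: P => X /= /andP[_ /eqP]. Qed.

Fact genmx_PGpoint_subproof v :
  v != 0 -> (\rank <<v>>%MS == 1%N) && (<<<<v>>>>%MS == <<v>>%MS).
Proof. by move=> v_neq0; rewrite mxrank_gen rank_rV v_neq0 genmx_id eqxx. Qed.

Fact delta_rV_neq0 : delta_mx 0 0 != 0 :> 'rV[F]_n.+1.
Proof. by apply/eqP => /matrixP/(_ 0 0)/eqP; rewrite !mxE !eqxx oner_eq0. Qed.

Definition PGpoint0 : PGpoint F n :=
  Sub <<delta_mx 0 0>>%MS (genmx_PGpoint_subproof delta_rV_neq0).

Definition span_point v : PGpoint F n := insubd PGpoint0 <<v>>%MS.

Lemma val_span_point v : v != 0 -> val (span_point v) = <<v>>%MS.
Proof.
by move=> v_neq0; rewrite /span_point insubdK // unfold_in genmx_PGpoint_subproof.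
Qed.

Lemma PGpoint_eqmx v P : v != 0 -> (v <= val P)%MS -> (v == val P)%MS.
Proof.
by move=> v_neq0 vP; rewrite -(mxrank_leqif_eq vP).2 rank_rV v_neq0 rank_PGpoint.
Qed.

Lemma span_point_eq v P : v != 0 -> (span_point v == P) = (v <= val P)%MS.
Proof.
move=> v_neq0; rewrite -val_eqE val_span_point // -{1}(genmx_PGpoint P).
apply/idP/idP => [/eqP/genmxP/andP[] // | vP].
exact/eqP/genmxP/PGpoint_eqmx.
Qed.

Lemma PGpoint_eq_sub v P Q :
  v != 0 -> (v <= val P)%MS -> (v <= val Q)%MS -> P = Q.
Proof. by move=> v_neq0; rewrite -!span_point_eq // => /eqP <- /eqP. Qed.

Lemma nz_row_PGpoint_neq0 P : nz_row (val P) != 0.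
Proof. by rewrite nz_row_eq0 -mxrank_eq0 rank_PGpoint. Qed.

Lemma sub_PGpoint_scale v P : v != 0 -> (v <= val P)%MS ->
  exists2 t : F, t != 0 & v = t *: nz_row (val P).
Proof.
move=> v_neq0 vP; have /sub_rVP[t def_v] : (v <= nz_row (val P))%MS.
  by rewrite (eqmxP (PGpoint_eqmx (nz_row_PGpoint_neq0 P) (nz_row_sub (val P)))).
by exists t => //; apply: contraNneq v_neq0 => t0; rewrite def_v t0 scale0r.
Qed.

Lemma card_PGpoint_nonzero P :
  #|[pred v : 'rV[F]_n.+1 | (v != 0) && (v <= val P)%MS]| = q.-1.
Proof.
set w := nz_row (val P); have w_neq0 : w != 0 := nz_row_PGpoint_neq0 P.
have scale_inj : injective (fun t : F => t *: w).
  move=> s t /eqP; rewrite -subr_eq0 -scalerBl scaler_eq0 (negbTE w_neq0) orbF.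
  by rewrite subr_eq0 => /eqP.
rewrite -(cardC1 (0 : F)) -(card_imset (predC1 0) scale_inj).
apply: eq_card => v; rewrite inE; apply/andP/imsetP => [[v_neq0 vP] | [t]].
  by have [t t_neq0 ->] := sub_PGpoint_scale v_neq0 vP; exists t; rewrite ?inE.
rewrite inE => t_neq0 ->; split; first by rewrite scaler_eq0 negb_or t_neq0.
by rewrite scalemx_sub ?nz_row_sub.
Qed.

Lemma sum_PGpoint_scale_invariant (R : nmodType) (g : 'rV[F]_n.+1 -> R) P :
    (forall (t : F) v, t != 0 -> g (t *: v) = g v) ->
  \sum_(v | (v != 0) && (v <= val P)%MS) g v = g (nz_row (val P)) *+ q.-1.
Proof.
move=> g_scale; rewrite -(card_PGpoint_nonzero P) -sumr_const.
apply: eq_bigr => v /andP[v_neq0 vP].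
by have [t t_neq0 ->] := sub_PGpoint_scale v_neq0 vP; rewrite g_scale.
Qed.

Lemma sum_nonzero_submx_PGpoint (R : nmodType) (g : 'rV[F]_n.+1 -> R) m
    (H : 'M[F]_(m, n.+1)) :
  \sum_(v : 'rV_n.+1 | (v != 0) && (v <= H)%MS) g v =
  \sum_(P : PGpoint F n | (val P <= H)%MS)
     \sum_(v : 'rV_n.+1 | (v != 0) && (v <= val P)%MS) g v.
Proof.
rewrite (partition_big span_point (fun P => (val P <= H)%MS)); last first.
  by move=> v /andP[v_neq0 vH]; rewrite val_span_point // genmxE.
apply: eq_bigr => P PH; apply: eq_bigl => v.
case v_neq0 : (v != 0); rewrite //= span_point_eq //.
by apply/andb_idl => vP; apply: submx_trans vP PH.
Qed.

End ProjectivePoints.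

Section PGPowerMap.

Variables (F : finFieldType) (L : fieldExtType F) (n : nat).
Variable phi : {linear 'rV[F]_n.+1 -> L}.
Hypothesis phi_inj : injective phi.
Local Notation q := #|F|.

Definition PG_power (P : PGpoint F n) : L := phi (nz_row (val P)) ^+ q.-1.

Lemma phi_neq0 v : v != 0 -> phi v != 0.
Proof. by rewrite -(inj_eq phi_inj) linear0. Qed.

Lemma expf_phi_scale (t : F) v : t != 0 -> phi (t *: v) ^+ q.-1 = phi v ^+ q.-1.
Proof. by move=> t_neq0; rewrite linearZ exprZn expf_card_pred // scale1r. Qed.

Lemma PG_power_inj : injective PG_power.
Proof.
move=> P Q; rewrite /PG_power; set u := nz_row (val P); set w := nz_row (val Q).
move=> eq_pow; have w_neq0 : phi w != 0 by rewrite phi_neq0 ?nz_row_PGpoint_neq0.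
have [t def_t] : exists t : F, phi u / phi w = t%:A.
  by apply: expf_card_pred_eq1; rewrite expr_div_n eq_pow divff // expf_neq0.
have u_tw : u = t *: w.
  by apply: phi_inj; rewrite -[phi u](divfK w_neq0) def_t mulr_algl linearZ.
apply: (PGpoint_eq_sub (nz_row_PGpoint_neq0 P)); first exact: nz_row_sub.
by rewrite -/u u_tw scalemx_sub ?nz_row_sub.
Qed.

Lemma sum_hyperplane_PG_power (H : PGhyperplane F n) :
  (1 < n)%N -> \sum_(P | (val P <= val H)%MS) PG_power P = 0.
Proof.
move=> n_gt1; have rankH : \rank (val H) = n by case: H => X /= /andP[/eqP].
have := @sum_submx_linear_expf F L _ _ phi (val H); rewrite rankH => /(_ n_gt1).
rewrite (bigD1 0) ?sub0mx //= linear0 expr0n gtn_eqF ?card_finField_pred_gt0 // add0r.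
rewrite (eq_bigl (fun v => (v != 0) && (v <= val H)%MS)) => [|v]; last first.
  by rewrite andbC.
rewrite sum_nonzero_submx_PGpoint (eq_bigr (fun P => - PG_power P)) => [|P _].
  by rewrite sumrN => /eqP; rewrite oppr_eq0 => /eqP.
by rewrite sum_PGpoint_scale_invariant ?scaler_card_pred // => t v /expf_phi_scale.
Qed.

Lemma PG_hyperplane_additive :
  (1 < n)%N -> additive_design (PG_hyperplane_blocks F n) L.
Proof.
move=> n_gt1; exists PG_power; split=> [|_ /imsetP[H _ ->]].
  exact: PG_power_inj.
rewrite (eq_bigl (fun P => (val P <= val H)%MS)) => [|P]; last by rewrite inE.
exact: sum_hyperplane_PG_power.
Qed.

End PGPowerMap.

Lemma isog_abelem_card_eq (gT rT : finGroupType) (G : {group gT})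
    (H : {group rT}) p p' :
  (p.-abelem G -> p'.-abelem H -> #|G| = #|H| -> G \isog H)%g.
Proof.
move=> abelG abelH card_GH.
suffices abelH_p : (p.-abelem H)%g.
  by rewrite (isog_abelem_card _ abelG) abelH_p card_GH eqxx.
have [-> | ntH] := eqsVneq H 1%g; first exact: abelem1.
have [p'_pr p'_dvd_H _] := pgroup_pdiv (abelem_pgroup abelH) ntH.
have /(pnat_dvd p'_dvd_H) : p.-nat #|H|.
  by rewrite -card_GH; apply: abelem_pgroup abelG.
by rewrite pnatE // => /eqnP <-.
Qed.

Lemma additive_design_isog (V : finType) (B : {set {set V}})
    (G1 G2 : finZmodType) :
  ([set: G1] \isog [set: G2])%g -> additive_design B G1 -> additive_design B G2.
Proof.
case/isogP=> psi /injmP psi_inj _ [f [f_inj f_sum]].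
have psi_sum (I : finType) (P : pred I) (h : I -> G1) :
    psi (\sum_(i | P i) h i) = \sum_(i | P i) psi (h i).
  elim/big_rec2: _ => [|i _ y _ <-]; first exact: morph1.
  exact: (morphM psi (in_setT _) (in_setT _)).
exists (psi \o f); split=> [x y /psi_inj eq_fxy | b /f_sum sum_b0].
  by apply: f_inj; apply: eq_fxy; rewrite inE.
by rewrite -psi_sum sum_b0; apply: morph1.
Qed.

Theorem corollary3p2 (F : finFieldType) (n : nat) (G : finZmodType) :
  (2 <= n)%N ->
  elementary_abelian_of_order G (#|F| ^ n.+1) ->
  additive_design (PG_hyperplane_blocks F n) G.
Proof.
move=> n_gt1 [card_G [p [p_pr G_p]]].
have [L dimL] := finField_ext_exists F (ltn0Sn n).
have [phi phi_inj] := vect_rV_linear_inj dimL.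
have [c _ pcharFc] := finPcharP F.
have abelem_L : (c.-abelem [set: FinFieldExtType L])%g.
  by apply: fin_ring_pchar_abelem; rewrite pchar_lalg.
have abelem_G : (p.-abelem [set: G])%g.
  apply/abelemP => //; split=> [|x _]; first exact: FinRing.zmod_abelian.
  by rewrite FinRing.zmodXgE G_p.
have card_L : #|[set: FinFieldExtType L]| = #|[set: G]|.
  rewrite !cardsT card_G -dimL.
  by rewrite -(card_vspace (fullv : {vspace finvect_type L})) card_vspacef.
apply: (additive_design_isog (isog_abelem_card_eq abelem_L abelem_G card_L)).
exact: PG_hyperplane_additive phi_inj n_gt1.
Qed.
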